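(* Let $A\subseteq\mathbb{N}$ and $x\in\mathbb{R}$. There exists a density measure $\mu$ such that $\mu(A)=x$ if and only if $x\in[\underline{\underline{d}}(A),\overline{\overline{d}}(A)]$.
   Context: $\mathbb{N}=\{1,2,3,\dots\}$. For $A\subseteq\mathbb{N}$ let $A(n)=|A\cap[1,n]|$. Let $\mathcal{D}$ be the collection of all $A\subseteq\mathbb{N}$ for which the asymptotic density $d(A)=\lim_{n\to\infty}\frac{A(n)}{n}$ exists. A density measure is a function $\mu:\mathcal{P}(\mathbb{N})\to[0,1]$ with $\mu(\mathbb{N})=1$, $\mu(A\cup B)=\mu(A)+\mu(B)$ for all disjoint $A,B\subseteq\mathbb{N}$, and $\mu(A)=d(A)$ for all $A\in\mathcal{D}$. Define $\underline{\underline{d}}(A)=\sup\{d(B);\ B\subseteq A,\ B\in\mathcal{D}\}$ and $\overline{\overline{d}}(A)=\inf\{d(C);\ C\supseteq A,\ C\in\mathcal{D}\}$. *)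

From Stdlib Require Import Reals Lra Classical ClassicalEpsilon.
From Coquelicot Require Import Coquelicot.
Open Scope R_scope.

Definition PosNat : Type := {k : nat | (0 < k)%nat}.

Definition subsetN (B C : PosNat -> Prop) : Prop := forall k, B k -> C k.

Definition fullN : PosNat -> Prop := fun _ => True.

Definition unionN (B C : PosNat -> Prop) : PosNat -> Prop := fun k => B k \/ C k.

Definition disjointN (B C : PosNat -> Prop) : Prop := forall k, ~ (B k /\ C k).

Definition indic (P : Prop) : R :=
  if excluded_middle_informative P then 1 else 0.

Fixpoint countN (A : PosNat -> Prop) (n : nat) : R :=
  match n with
  | O => 0
  | S m => countN A m + indic (A (exist (fun k => (0 < k)%nat) (S m) (Nat.lt_0_succ m)))
  end.

Definition has_density (A : PosNat -> Prop) (l : R) : Prop :=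
  is_lim_seq (fun n => countN A n / INR n) (Finite l).

Definition in_D (A : PosNat -> Prop) : Prop := exists l, has_density A l.

Definition density_measure (mu : (PosNat -> Prop) -> R) : Prop :=
  (forall A, 0 <= mu A <= 1) /\
  mu fullN = 1 /\
  (forall A B, disjointN A B -> mu (unionN A B) = mu A + mu B) /\
  (forall A l, has_density A l -> mu A = l).

Definition lower_dd (A : PosNat -> Prop) : R :=
  real (Lub_Rbar (fun l => exists B, subsetN B A /\ has_density B l)).

Definition upper_dd (A : PosNat -> Prop) : R :=
  real (Glb_Rbar (fun l => exists C, subsetN A C /\ has_density C l)).

From Stdlib Require Import Reals.
From Coquelicot Require Import Coquelicot.
Open Scope R_scope.
From Stdlib Require Import Lra Lia Classical ClassicalEpsilon FunctionalExtensionality PropExtensionality.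
From mathcomp Require classical_sets.

(* A density measure is monotone, so [mu A] is squeezed between the densities of the
   subsets and of the supersets of [A]. The Cesàro
   mean is a positive linear functional, and it extends positively to [indicator A] with
   value [x]: if [g >= indicator A] has Cesàro mean [r], a greedy construction yields a
   superset of [A] of density exactly [r], whence [x <= upper_dd A <= r] (and dually for
   [g <= indicator A]). By Zorn's lemma this extends to a maximal positive linear
   functional, which by the one-dimensional extension step of Hahn-Banach is defined on
   every function with values in [0, 1]; on indicators it is a density measure. *)

Section PositiveExtension.

Context {X : Type}.

(* Graph of a positive linear functional on a subspace of [X -> R]; single-valuedness
   follows from positivity ([pl_functional]). *)
Record positive_linear (G : (X -> R) * R -> Prop) : Prop := {
  pl_zero : G (fun _ => 0, 0);
  pl_add : forall f g r s, G (f, r) -> G (g, s) -> G (fun x => f x + g x, r + s);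
  pl_scale : forall f r a, G (f, r) -> G (fun x => a * f x, a * r);
  pl_pos : forall f r, G (f, r) -> (forall x, 0 <= f x) -> 0 <= r }.

Lemma pl_sub G f g r s : positive_linear G -> G (f, r) -> G (g, s) ->
  G (fun x => g x - f x, s - r).
Proof.
  intros HG Gf Gg.
  replace (fun x => g x - f x) with (fun x => g x + -1 * f x)
    by (apply functional_extensionality; intro; ring).
  replace (s - r) with (s + -1 * r) by ring.
  exact (pl_add _ HG _ _ _ _ Gg (pl_scale _ HG _ _ (-1) Gf)).
Qed.

Lemma pl_mono G f g r s : positive_linear G -> G (f, r) -> G (g, s) ->
  (forall x, f x <= g x) -> r <= s.
Proof.
  intros HG Gf Gg fg.
  assert (0 <= s - r); [|lra].
  apply (pl_pos _ HG _ _ (pl_sub _ _ _ _ _ HG Gf Gg)).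
  intro x; specialize (fg x); lra.
Qed.

Lemma pl_functional G f r s : positive_linear G -> G (f, r) -> G (f, s) -> r = s.
Proof.
  intros HG Gr Gs.
  apply Rle_antisym; [apply (pl_mono G f f) | apply (pl_mono G f f)]; auto using Rle_refl.
Qed.

Definition extend (G : (X -> R) * R -> Prop) (f : X -> R) (v : R) (p : (X -> R) * R) : Prop :=
  exists g r t, G (g, r) /\ p = (fun x => g x + t * f x, r + t * v).

Lemma extend_incl G f v p : G p -> extend G f v p.
Proof.
  destruct p as [g r]. intro Gg. exists g, r, 0. split; [exact Gg|].
  f_equal; [apply functional_extensionality; intro|]; ring.
Qed.

Lemma extend_point G f v : positive_linear G -> extend G f v (f, v).
Proof.
  intro HG. exists (fun _ => 0), 0, 1. split; [exact (pl_zero _ HG)|].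
  f_equal; [apply functional_extensionality; intro|]; ring.
Qed.

Section Extend.

Variables (G : (X -> R) * R -> Prop) (f : X -> R) (v : R).
Hypothesis HG : positive_linear G.
Hypothesis v_above : forall g r, G (g, r) -> (forall x, g x <= f x) -> r <= v.
Hypothesis v_below : forall g r, G (g, r) -> (forall x, f x <= g x) -> v <= r.

Lemma extend_pos g r t : G (g, r) -> (forall x, 0 <= g x + t * f x) -> 0 <= r + t * v.
Proof.
  intros Gg pos.
  destruct (Rtotal_order t 0) as [tn|[->|tp]].
  - assert (v <= / - t * r).
    { apply (v_below _ _ (pl_scale _ HG _ _ (/ - t) Gg)). intro x.
      assert (0 <= / - t * (g x + t * f x))
        by (apply Rmult_le_pos; [left; apply Rinv_0_lt_compat; lra | apply pos]).
      replace (/ - t * g x) with (f x + / - t * (g x + t * f x)) by (field; lra). lra. }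
    replace (r + t * v) with (- t * (/ - t * r - v)) by (field; lra).
    apply Rmult_le_pos; lra.
  - replace (r + 0 * v) with r by ring.
    apply (pl_pos _ HG _ _ Gg). intro x. specialize (pos x). lra.
  - assert (- / t * r <= v).
    { apply (v_above _ _ (pl_scale _ HG _ _ (- / t) Gg)). intro x.
      assert (0 <= / t * (g x + t * f x))
        by (apply Rmult_le_pos; [left; apply Rinv_0_lt_compat; lra | apply pos]).
      replace (- / t * g x) with (f x - / t * (g x + t * f x)) by (field; lra). lra. }
    replace (r + t * v) with (t * (v - - / t * r)) by (field; lra).
    apply Rmult_le_pos; lra.
Qed.

Lemma extend_positive_linear : positive_linear (extend G f v).
Proof.
  split.
  - exact (extend_incl _ _ _ _ (pl_zero _ HG)).
  - intros f1 f2 s1 s2 [g1 [r1 [t1 [G1 E1]]]] [g2 [r2 [t2 [G2 E2]]]].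
    injection E1 as -> ->. injection E2 as -> ->.
    exists (fun x => g1 x + g2 x), (r1 + r2), (t1 + t2).
    split; [exact (pl_add _ HG _ _ _ _ G1 G2)|].
    f_equal; [apply functional_extensionality; intro|]; ring.
  - intros f1 s1 a [g1 [r1 [t1 [G1 E1]]]]. injection E1 as -> ->.
    exists (fun x => a * g1 x), (a * r1), (a * t1).
    split; [exact (pl_scale _ HG _ _ _ G1)|].
    f_equal; [apply functional_extensionality; intro|]; ring.
  - intros f1 s1 [g1 [r1 [t1 [G1 E1]]]]. injection E1 as -> ->.
    exact (extend_pos _ _ _ G1).
Qed.

End Extend.

Lemma pl_chain_union (F : ((X -> R) * R -> Prop) -> Prop) :
  (exists K, F K) -> (forall K, F K -> positive_linear K) ->
  classical_sets.total_on F classical_sets.subset ->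
  positive_linear (fun p => exists2 K, F K & K p).
Proof.
  intros [K0 FK0] Fpl Ftot.
  split.
  - exists K0; [exact FK0 | exact (pl_zero _ (Fpl _ FK0))].
  - intros f g r s [K1 FK1 K1f] [K2 FK2 K2g].
    destruct (Ftot K1 K2 FK1 FK2) as [sub|sub].
    + exists K2; [exact FK2|]. exact (pl_add _ (Fpl _ FK2) _ _ _ _ (sub _ K1f) K2g).
    + exists K1; [exact FK1|]. exact (pl_add _ (Fpl _ FK1) _ _ _ _ K1f (sub _ K2g)).
  - intros f r a [K FK Kf]. exists K; [exact FK | exact (pl_scale _ (Fpl _ FK) _ _ _ Kf)].
  - intros f r [K FK Kf]. exact (pl_pos _ (Fpl _ FK) _ _ Kf).
Qed.

Definition pl_maximal (M : (X -> R) * R -> Prop) : Prop :=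
  forall N, positive_linear N -> (forall p, M p -> N p) -> forall p, N p -> M p.

(* Zorn's lemma is applied to the graphs [G] such that [G0 ∪ G] is positive linear,
   a family that also contains the union of the empty chain. *)
Lemma positive_linear_maximal_extension G0 : positive_linear G0 ->
  exists M, positive_linear M /\ (forall p, G0 p -> M p) /\ pl_maximal M.
Proof.
  intro HG0.
  pose (P := fun G : (X -> R) * R -> Prop => positive_linear (fun p => G0 p \/ G p)).
  destruct (@classical_sets.Zorn_bigcup _ P) as [A [PA Amax]].
  - intros F FP Ftot.
    pose (F' := fun K => K = G0 \/ exists2 Y, F Y & K = (fun p => G0 p \/ Y p)).
    assert (E : (fun p => G0 p \/ classical_sets.bigcup F (fun Y => Y) p)
                = (fun p => exists2 K, F' K & K p)).
    { apply functional_extensionality; intro p; apply propositional_extensionality.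
      split.
      - intros [G0p | [Y FY Yp]]; [exists G0; [left|]; auto|].
        exists (fun p => G0 p \/ Y p); [right; exists Y|right]; auto.
      - intros [K [-> | [Y FY ->]] Kp]; [now left|].
        destruct Kp as [G0p | Yp]; [now left | right; now exists Y]. }
    unfold P. rewrite E. apply pl_chain_union.
    + exists G0. now left.
    + intros K [-> | [Y FY ->]]; [exact HG0 | exact (FP Y FY)].
    + intros K1 K2 [-> | [Y1 FY1 ->]] [-> | [Y2 FY2 ->]].
      * left. intros p Kp. exact Kp.
      * left. intros p Kp. now left.
      * right. intros p Kp. now left.
      * destruct (Ftot Y1 Y2 FY1 FY2) as [sub|sub]; [left|right];
          intros p [G0p | Yp]; auto.
  - exists (fun p => G0 p \/ A p). split; [exact PA | split; [now left|]].
    intros N HN AN p Np.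
    apply NNPP. intro nAp.
    apply (Amax N); [split; [intros q Aq; apply AN; now right|] | ].
    + intro NA. apply nAp. right. now apply NA.
    + unfold P.
      replace (fun q => G0 q \/ N q) with N; [exact HN|].
      apply functional_extensionality; intro q; apply propositional_extensionality.
      split; [now right | intros [G0q | Nq]; [apply AN; now left | exact Nq]].
Qed.

Lemma pl_maximal_total M : positive_linear M -> pl_maximal M -> M (fun _ => 1, 1) ->
  forall f, (forall x, 0 <= f x <= 1) -> exists r, M (f, r).
Proof.
  intros HM Mmax M1 f f01.
  pose (E := fun r => exists g, M (g, r) /\ forall x, g x <= f x).
  assert (E_bound : bound E).
  { exists 1. intros r [g [Mg gf]]. apply (pl_mono M g _ r 1 HM Mg M1).
    intro x. specialize (gf x). specialize (f01 x). lra. }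
  assert (E_inhabited : exists r, E r).
  { exists 0, (fun _ => 0). split; [exact (pl_zero _ HM) | intro x; apply f01]. }
  destruct (completeness E E_bound E_inhabited) as [v [v_ub v_lub]].
  exists v. apply (Mmax (extend M f v)).
  - apply extend_positive_linear; [exact HM | |].
    + intros g r Mg gf. apply v_ub. now exists g.
    + intros g' r' Mg' fg'. apply v_lub. intros r [g [Mg gf]].
      apply (pl_mono M g g' r r' HM Mg Mg'). intro x. specialize (gf x). specialize (fg' x). lra.
  - intros p Mp. now apply extend_incl.
  - now apply extend_point.
Qed.

End PositiveExtension.

Definition pos_succ (m : nat) : PosNat := exist (fun k => (0 < k)%nat) (S m) (Nat.lt_0_succ m).

Fixpoint partial_sum (f : PosNat -> R) (n : nat) : R :=
  match n with O => 0 | S m => partial_sum f m + f (pos_succ m) end.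

Definition cesaro_mean (f : PosNat -> R) (c : R) : Prop :=
  is_lim_seq (fun n => partial_sum f n / INR n) c.

Definition indicator (B : PosNat -> Prop) (k : PosNat) : R := indic (B k).

Lemma partial_sum_add f g n :
  partial_sum (fun k => f k + g k) n = partial_sum f n + partial_sum g n.
Proof. induction n as [|n IH]; simpl; [|rewrite IH]; ring. Qed.

Lemma partial_sum_scal a f n : partial_sum (fun k => a * f k) n = a * partial_sum f n.
Proof. induction n as [|n IH]; simpl; [|rewrite IH]; ring. Qed.

Lemma partial_sum_const a n : partial_sum (fun _ => a) n = a * INR n.
Proof. induction n as [|n IH]; simpl partial_sum; [simpl; ring | rewrite IH, S_INR; ring]. Qed.

Lemma partial_sum_nonneg f n : (forall k, 0 <= f k) -> 0 <= partial_sum f n.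
Proof. intro pos. induction n as [|n IH]; simpl; [lra | specialize (pos (pos_succ n)); lra]. Qed.

Lemma countN_partial_sum B n : countN B n = partial_sum (indicator B) n.
Proof. induction n as [|n IH]; simpl; [|rewrite IH]; reflexivity. Qed.

Lemma has_density_cesaro B l : has_density B l <-> cesaro_mean (indicator B) l.
Proof.
  unfold has_density, cesaro_mean.
  split; apply is_lim_seq_ext; intro n; now rewrite countN_partial_sum.
Qed.

Lemma cesaro_mean_add f g a b :
  cesaro_mean f a -> cesaro_mean g b -> cesaro_mean (fun k => f k + g k) (a + b).
Proof.
  intros Hf Hg.
  apply is_lim_seq_ext with (fun n => partial_sum f n / INR n + partial_sum g n / INR n).
  - intro n. rewrite partial_sum_add. unfold Rdiv. ring.
  - now apply is_lim_seq_plus'.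
Qed.

Lemma cesaro_mean_scal t f a : cesaro_mean f a -> cesaro_mean (fun k => t * f k) (t * a).
Proof.
  intro Hf. apply is_lim_seq_ext with (fun n => t * (partial_sum f n / INR n)).
  - intro n. rewrite partial_sum_scal. unfold Rdiv. ring.
  - exact (is_lim_seq_scal_l _ t a Hf).
Qed.

Lemma cesaro_mean_const a : cesaro_mean (fun _ => a) a.
Proof.
  apply is_lim_seq_ext_loc with (fun _ => a); [|apply is_lim_seq_const].
  exists 1%nat. intros n n_pos. rewrite partial_sum_const. field. apply not_0_INR. lia.
Qed.

Lemma cesaro_mean_nonneg f a : (forall k, 0 <= f k) -> cesaro_mean f a -> 0 <= a.
Proof.
  intros pos Hf.
  apply (is_lim_seq_le (fun _ => 0) (fun n => partial_sum f n / INR n) 0 a);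
    [|apply is_lim_seq_const | exact Hf].
  intro n. destruct n as [|n]; [simpl; unfold Rdiv; rewrite Rinv_0; lra|].
  apply Rdiv_le_0_compat; [now apply partial_sum_nonneg | apply lt_0_INR; lia].
Qed.

Lemma indicator_01 B k : 0 <= indicator B k <= 1.
Proof. unfold indicator, indic. destruct (excluded_middle_informative (B k)); lra. Qed.

Lemma indicator_in (B : PosNat -> Prop) k : B k -> indicator B k = 1.
Proof. intro Bk. unfold indicator, indic. now destruct (excluded_middle_informative (B k)). Qed.

Lemma indicator_notin (B : PosNat -> Prop) k : ~ B k -> indicator B k = 0.
Proof. intro Bk. unfold indicator, indic. now destruct (excluded_middle_informative (B k)). Qed.

Lemma indicator_full : indicator fullN = fun _ => 1.
Proof. apply functional_extensionality. intro k. now apply indicator_in. Qed.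

Lemma indicator_compl B : indicator (fun k => ~ B k) = fun k => 1 - indicator B k.
Proof.
  apply functional_extensionality. intro k. destruct (classic (B k)) as [Bk|Bk].
  - rewrite indicator_notin, indicator_in by tauto. ring.
  - rewrite indicator_in, indicator_notin by tauto. ring.
Qed.

Lemma indicator_union B C : disjointN B C ->
  indicator (unionN B C) = fun k => indicator B k + indicator C k.
Proof.
  intro BC. apply functional_extensionality. intro k. unfold unionN.
  destruct (classic (B k)) as [Bk|Bk]; destruct (classic (C k)) as [Ck|Ck].
  - exfalso. exact (BC k (conj Bk Ck)).
  - rewrite (indicator_in (fun k => B k \/ C k)), indicator_in, indicator_notin by tauto. ring.
  - rewrite (indicator_in (fun k => B k \/ C k)), (indicator_notin B), indicator_in by tauto. ring.
  - rewrite !indicator_notin by tauto. ring.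
Qed.

Lemma has_density_full : has_density fullN 1.
Proof. apply has_density_cesaro. rewrite indicator_full. apply cesaro_mean_const. Qed.

Lemma has_density_empty : has_density (fun _ => False) 0.
Proof.
  apply has_density_cesaro.
  replace (indicator (fun _ => False)) with (fun _ : PosNat => 0); [apply cesaro_mean_const|].
  apply functional_extensionality. intro k. now rewrite indicator_notin.
Qed.

Lemma has_density_compl C l : has_density C l -> has_density (fun k => ~ C k) (1 - l).
Proof.
  rewrite !has_density_cesaro, indicator_compl. intro HC.
  replace (fun k => 1 - indicator C k) with (fun k => 1 + -1 * indicator C k)
    by (apply functional_extensionality; intro; ring).
  replace (1 - l) with (1 + -1 * l) by ring.
  apply cesaro_mean_add; [apply cesaro_mean_const | now apply cesaro_mean_scal].
Qed.

Lemma has_density_01 B l : has_density B l -> 0 <= l <= 1.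
Proof.
  intro HB. split.
  - apply has_density_cesaro in HB. exact (cesaro_mean_nonneg _ _ (fun k => proj1 (indicator_01 B k)) HB).
  - apply has_density_compl, has_density_cesaro in HB.
    enough (0 <= 1 - l) by lra.
    apply (cesaro_mean_nonneg _ _ (fun k => proj1 (indicator_01 _ k)) HB).
Qed.

Lemma real_Lub_Rbar_is_lub (E : R -> Prop) b :
  (exists l, E l) -> (forall l, E l -> l <= b) -> is_lub E (real (Lub_Rbar E)).
Proof.
  intros [l0 El0] Eb. destruct (Lub_Rbar_correct E) as [ub least].
  assert (Rbar_le l0 (Lub_Rbar E)) by now apply ub.
  assert (Rbar_le (Lub_Rbar E) b) by (apply least; intros l El; now apply Eb).
  destruct (Lub_Rbar E) as [L| |]; simpl in *; try contradiction.
  split; [intros l El; now apply ub|].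
  intros b' Eb'. now apply (least (Finite b')).
Qed.

Lemma real_Glb_Rbar_is_glb (E : R -> Prop) b :
  (exists l, E l) -> (forall l, E l -> b <= l) ->
  (forall l, E l -> real (Glb_Rbar E) <= l) /\
  (forall b', (forall l, E l -> b' <= l) -> b' <= real (Glb_Rbar E)).
Proof.
  intros [l0 El0] Eb. destruct (Glb_Rbar_correct E) as [lb greatest].
  assert (Rbar_le (Glb_Rbar E) l0) by now apply lb.
  assert (Rbar_le b (Glb_Rbar E)) by (apply greatest; intros l El; now apply Eb).
  destruct (Glb_Rbar E) as [L| |]; simpl in *; try contradiction.
  split; [intros l El; now apply lb|].
  intros b' Eb'. now apply (greatest (Finite b')).
Qed.

Lemma lower_dd_is_lub A :
  is_lub (fun l => exists B, subsetN B A /\ has_density B l) (lower_dd A).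
Proof.
  apply (real_Lub_Rbar_is_lub _ 1).
  - exists 0, (fun _ => False). split; [intros k [] | exact has_density_empty].
  - intros l [B [_ HB]]. exact (proj2 (has_density_01 B l HB)).
Qed.

Lemma upper_dd_is_glb A :
  (forall l, (exists C, subsetN A C /\ has_density C l) -> upper_dd A <= l) /\
  (forall b, (forall l, (exists C, subsetN A C /\ has_density C l) -> b <= l) -> b <= upper_dd A).
Proof.
  apply (real_Glb_Rbar_is_glb _ 0).
  - exists 1, fullN. split; [intros k _; exact I | exact has_density_full].
  - intros l [C [_ HC]]. exact (proj1 (has_density_01 C l HC)).
Qed.

Lemma is_lim_seq_inv_INR : is_lim_seq (fun n => / INR n) 0.
Proof. exact (is_lim_seq_inv INR p_infty is_lim_seq_INR ltac:(discriminate)). Qed.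

Fixpoint running_max (e : nat -> R) (n : nat) : R :=
  match n with O => Rabs (e O) | S m => Rmax (running_max e m) (Rabs (e (S m))) end.

Lemma running_max_S e n : running_max e (S n) = Rmax (running_max e n) (Rabs (e (S n))).
Proof. reflexivity. Qed.

Lemma running_max_ge e m n : (m <= n)%nat -> Rabs (e m) <= running_max e n.
Proof.
  induction 1 as [|n _ IH].
  - destruct m; simpl; [lra | apply Rmax_r].
  - simpl. eapply Rle_trans; [exact IH | apply Rmax_l].
Qed.

Lemma running_max_nonneg e n : 0 <= running_max e n.
Proof. eapply Rle_trans; [apply Rabs_pos | apply (running_max_ge e 0 n); lia]. Qed.

Lemma running_max_o (e : nat -> R) : is_lim_seq (fun n => e n / INR n) 0 ->
  is_lim_seq (fun n => running_max e n / INR n) 0.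
Proof.
  intro He. apply is_lim_seq_spec in He. apply is_lim_seq_spec. intros [eps eps_pos]. simpl.
  destruct (He (mkposreal (eps / 2) ltac:(lra))) as [N HN]. simpl in HN.
  assert (growth : forall j, running_max e (S N + j) <= running_max e (S N) + eps / 2 * INR (S N + j)).
  { induction j as [|j IH].
    - rewrite Nat.add_0_r. assert (0 <= eps / 2 * INR (S N)) by (apply Rmult_le_pos; [lra | apply pos_INR]).
      lra.
    - replace (S N + S j)%nat with (S (S N + j)) by lia.
      assert (Hj := HN (S (S N + j)) ltac:(lia)).
      assert (pos : 0 < INR (S (S N + j))) by (apply lt_0_INR; lia).
      rewrite Rminus_0_r, Rabs_div, (Rabs_right (INR _)) in Hj by lra.
      apply (Rlt_div_l _ _ _ pos) in Hj.
      assert (eps / 2 * INR (S N + j) <= eps / 2 * INR (S (S N + j)))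
        by (apply Rmult_le_compat_l; [lra | apply le_INR; lia]).
      pose proof (running_max_nonneg e (S N)).
      rewrite running_max_S. apply Rmax_lub; lra. }
  assert (Hc := is_lim_seq_scal_l _ (running_max e (S N)) 0 is_lim_seq_inv_INR).
  rewrite Rbar_mult_0_r in Hc. apply is_lim_seq_spec in Hc.
  destruct (Hc (mkposreal (eps / 2) ltac:(lra))) as [N' HN']. cbn -[running_max] in HN'.
  exists (S N + N')%nat. intros n Hn.
  replace n with (S N + (n - S N))%nat in * by lia.
  set (m := (S N + (n - S N))%nat) in *.
  assert (pos : 0 < INR m) by (apply lt_0_INR; unfold m; lia).
  specialize (HN' m ltac:(lia)). specialize (growth (n - S N)%nat). fold m in growth.
  rewrite Rminus_0_r, Rabs_right in *;
    [| apply Rle_ge, Rmult_le_pos; [apply running_max_nonneg | left; now apply Rinv_0_lt_compat]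
     | apply Rle_ge, Rdiv_le_0_compat; [apply running_max_nonneg | exact pos]].
  apply (Rlt_div_l _ _ _ pos).
  apply Rmult_lt_compat_r with (r := INR m) in HN'; [|exact pos].
  rewrite Rmult_assoc, Rinv_l in HN' by lra. lra.
Qed.

Fixpoint greedy_count (A : PosNat -> Prop) (c : R) (n : nat) : R :=
  match n with
  | O => 0
  | S m => greedy_count A c m + indic (A (pos_succ m) \/ greedy_count A c m < c * INR (S m))
  end.

Definition greedy_cover (A : PosNat -> Prop) (c : R) (k : PosNat) : Prop :=
  A k \/ greedy_count A c (pred (proj1_sig k)) < c * INR (proj1_sig k).

Lemma countN_greedy_cover A c n : countN (greedy_cover A c) n = greedy_count A c n.
Proof. induction n as [|n IH]; simpl; [|rewrite IH]; reflexivity. Qed.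

Lemma greedy_count_S A c n : greedy_count A c (S n) =
  greedy_count A c n + indicator (fun k => A k \/ greedy_count A c n < c * INR (S n)) (pos_succ n).
Proof. reflexivity. Qed.

Lemma greedy_count_lower A c n : c <= 1 -> c * INR n - 1 <= greedy_count A c n.
Proof.
  intro c1. induction n as [|n IH]; [simpl; lra|].
  rewrite greedy_count_S.
  destruct (Rlt_dec (greedy_count A c n) (c * INR (S n))) as [below|above].
  - rewrite indicator_in by (cbv beta; tauto). rewrite S_INR in *. lra.
  - pose proof (indicator_01 (fun k => A k \/ greedy_count A c n < c * INR (S n)) (pos_succ n)).
    rewrite S_INR in *. lra.
Qed.

(* Since the last index [m] where the count was below [c m], only elements of [A] were added. *)
Lemma greedy_count_last_deficit A g c n : (forall k, indicator A k <= g k) ->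
  exists m, (m <= n)%nat /\
    greedy_count A c n <= c * INR m + 1 + partial_sum g n - partial_sum g m.
Proof.
  intro Ag. induction n as [|n [m [mn IH]]]; [exists O; split; [lia | simpl; lra]|].
  rewrite greedy_count_S.
  destruct (Rlt_dec (greedy_count A c n) (c * INR (S n))) as [below|above].
  - exists (S n). split; [lia|].
    pose proof (indicator_01 (fun k => A k \/ greedy_count A c n < c * INR (S n)) (pos_succ n)).
    lra.
  - exists m. split; [lia|]. simpl partial_sum.
    destruct (classic (A (pos_succ n))) as [An|An].
    + specialize (Ag (pos_succ n)). rewrite indicator_in in Ag |- * by (cbv beta; tauto). lra.
    + rewrite indicator_notin by (cbv beta; tauto).
      pose proof (Rle_trans _ _ _ (proj1 (indicator_01 A (pos_succ n))) (Ag (pos_succ n))). lra.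
Qed.

Lemma greedy_cover_density A g c : cesaro_mean g c -> (forall k, indicator A k <= g k) -> c <= 1 ->
  has_density (greedy_cover A c) c.
Proof.
  intros Hg Ag c1.
  pose (e := fun n => partial_sum g n - c * INR n).
  assert (He : is_lim_seq (fun n => e n / INR n) 0).
  { apply is_lim_seq_ext_loc with (fun n => partial_sum g n / INR n - c).
    - exists 1%nat. intros n n_pos. unfold e. field. apply not_0_INR. lia.
    - replace (Finite 0) with (Finite (c - c)) by (f_equal; ring).
      apply is_lim_seq_minus'; [exact Hg | apply is_lim_seq_const]. }
  unfold has_density.
  apply is_lim_seq_ext with (fun n => greedy_count A c n / INR n);
    [intro n; now rewrite countN_greedy_cover|].
  apply is_lim_seq_le_le_loc with (u := fun n => c - / INR n)
    (w := fun n => c + / INR n + e n / INR n + running_max e n / INR n).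
  - exists 1%nat. intros n n_pos.
    assert (pos : 0 < INR n) by (apply lt_0_INR; lia).
    destruct (greedy_count_last_deficit A g c n Ag) as [m [mn last]].
    pose proof (running_max_ge e m n mn). pose proof (Rle_abs (- e m)). rewrite Rabs_Ropp in *.
    pose proof (greedy_count_lower A c n c1).
    assert (inv_pos : 0 <= / INR n) by (left; now apply Rinv_0_lt_compat).
    split.
    + replace (c - / INR n) with ((c * INR n - 1) / INR n) by (field; lra).
      now apply Rmult_le_compat_r.
    + replace (c + / INR n + e n / INR n + running_max e n / INR n)
        with ((c * INR n + 1 + e n + running_max e n) / INR n) by (field; lra).
      apply Rmult_le_compat_r; [exact inv_pos | unfold e in *; lra].
  - replace (Finite c) with (Finite (c - 0)) by (f_equal; ring).
    apply is_lim_seq_minus'; [apply is_lim_seq_const | apply is_lim_seq_inv_INR].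
  - replace (Finite c) with (Finite (c + 0 + 0 + 0)) by (f_equal; ring).
    repeat apply is_lim_seq_plus'.
    + apply is_lim_seq_const.
    + apply is_lim_seq_inv_INR.
    + exact He.
    + now apply running_max_o.
Qed.

Lemma upper_dd_le_cesaro A g r : cesaro_mean g r -> (forall k, indicator A k <= g k) ->
  upper_dd A <= r.
Proof.
  intros Hg Ag. destruct (Rle_lt_dec r 1) as [r1|r1].
  - apply (proj1 (upper_dd_is_glb A)). exists (greedy_cover A r).
    split; [intros k Ak; now left | exact (greedy_cover_density A g r Hg Ag r1)].
  - enough (upper_dd A <= 1) by lra.
    apply (proj1 (upper_dd_is_glb A)). exists fullN.
    split; [intros k _; exact I | exact has_density_full].
Qed.

Lemma cesaro_le_lower_dd A g r : cesaro_mean g r -> (forall k, g k <= indicator A k) ->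
  r <= lower_dd A.
Proof.
  intros Hg gA.
  assert (Hg' : cesaro_mean (fun k => 1 + -1 * g k) (1 + -1 * r))
    by (apply cesaro_mean_add; [apply cesaro_mean_const | now apply cesaro_mean_scal]).
  assert (lub := lower_dd_is_lub A).
  destruct (Rle_lt_dec 0 r) as [r0|r0].
  - apply (proj1 lub). pose (C := greedy_cover (fun k => ~ A k) (1 + -1 * r)).
    exists (fun k => ~ C k). split.
    + intros k nCk. apply NNPP. intro nAk. apply nCk. now left.
    + replace r with (1 - (1 + -1 * r)) by ring. apply has_density_compl.
      apply (greedy_cover_density _ _ _ Hg'); [|lra].
      intro k. rewrite indicator_compl. specialize (gA k). lra.
  - enough (0 <= lower_dd A) by lra.
    apply (proj1 lub). exists (fun _ => False).
    split; [intros k [] | exact has_density_empty].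
Qed.

Definition cesaro_graph (p : (PosNat -> R) * R) : Prop := cesaro_mean (fst p) (snd p).

Lemma cesaro_graph_positive_linear : positive_linear cesaro_graph.
Proof.
  split; unfold cesaro_graph; simpl.
  - apply cesaro_mean_const.
  - intros; now apply cesaro_mean_add.
  - intros; now apply cesaro_mean_scal.
  - intros f r Hf pos. exact (cesaro_mean_nonneg f r pos Hf).
Qed.

Lemma density_measure_mono mu B C : density_measure mu -> subsetN B C -> mu B <= mu C.
Proof.
  intros (mu01 & _ & mu_add & _) BC.
  replace C with (unionN B (fun k => C k /\ ~ B k)).
  - rewrite mu_add by (intros k [Bk [_ nBk]]; contradiction).
    pose proof (mu01 (fun k => C k /\ ~ B k)). lra.
  - apply functional_extensionality. intro k. apply propositional_extensionality.
    unfold unionN. split; [intros [Bk | [Ck _]]; auto|].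
    intro Ck. destruct (classic (B k)); tauto.
Qed.

Lemma density_measure_bounds mu A : density_measure mu -> lower_dd A <= mu A <= upper_dd A.
Proof.
  intro Hmu. pose proof Hmu as (_ & _ & _ & mu_density). split.
  - apply (proj2 (lower_dd_is_lub A)). intros l [B [BA HB]].
    rewrite <- (mu_density B l HB). now apply density_measure_mono.
  - apply (proj2 (upper_dd_is_glb A)). intros l [C [AC HC]].
    rewrite <- (mu_density C l HC). now apply density_measure_mono.
Qed.

Lemma extend_cesaro_positive_linear A x : lower_dd A <= x <= upper_dd A ->
  positive_linear (extend cesaro_graph (indicator A) x).
Proof.
  intros [lo up]. apply extend_positive_linear; [exact cesaro_graph_positive_linear | |].
  - intros g r Hg gA. pose proof (cesaro_le_lower_dd A g r Hg gA). lra.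
  - intros g r Hg Ag. pose proof (upper_dd_le_cesaro A g r Hg Ag). lra.
Qed.

Lemma density_measure_of_functional M : positive_linear M -> pl_maximal M ->
  (forall p, cesaro_graph p -> M p) ->
  exists mu, density_measure mu /\ forall B, M (indicator B, mu B).
Proof.
  intros HM Mmax cesaro_M.
  assert (M1 : M (fun _ => 1, 1)) by (apply cesaro_M, cesaro_mean_const).
  destruct (choice (fun B r => M (indicator B, r))) as [mu Mmu].
  { intro B. exact (pl_maximal_total M HM Mmax M1 _ (indicator_01 B)). }
  exists mu. split; [|exact Mmu].
  split; [|split; [|split]].
  - intro B. split.
    + apply (pl_pos M HM _ _ (Mmu B)). intro k. apply indicator_01.
    + apply (pl_mono M _ _ _ _ HM (Mmu B) M1). intro k. apply indicator_01.
  - apply (pl_functional M _ _ _ HM (Mmu fullN)). now rewrite indicator_full.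
  - intros B C BC. apply (pl_functional M (indicator (unionN B C)) _ _ HM (Mmu _)).
    rewrite indicator_union by exact BC. exact (pl_add M HM _ _ _ _ (Mmu B) (Mmu C)).
  - intros B l HB. apply (pl_functional M _ _ _ HM (Mmu B)).
    apply cesaro_M. now apply has_density_cesaro.
Qed.

Theorem corollary3p3 (A : PosNat -> Prop) (x : R) :
  (exists mu : (PosNat -> Prop) -> R, density_measure mu /\ mu A = x) <->
  lower_dd A <= x <= upper_dd A.
Proof.
  split.
  - intros [mu [Hmu <-]]. now apply density_measure_bounds.
  - intro Hx.
    pose (G0 := extend cesaro_graph (indicator A) x).
    destruct (positive_linear_maximal_extension G0 (extend_cesaro_positive_linear A x Hx))
      as [M [HM [G0M Mmax]]].
    destruct (density_measure_of_functional M HM Mmax (fun p Hp => G0M p (extend_incl _ _ _ _ Hp)))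
      as [mu [Hmu Mmu]].
    exists mu. split; [exact Hmu|].
    apply (pl_functional M _ _ _ HM (Mmu A)), G0M, extend_point, cesaro_graph_positive_linear.
Qed.
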